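(* Let $(X,d)$ and $(Y,D)$ be metric spaces, $x\in X$, $y\in Y$. Suppose $\varepsilon\in(0,1]\mapsto\rho^x_\varepsilon$ is a zoom sequence at $x$ with values in $(Y,D)$ and base point $y$, with zoom modulus $F$, and suppose that for a given $\mu\in(0,1)$ this zoom sequence is scale stable at scale $\mu$, with limit relation $\bar\rho^x_\mu\subset\bar B(y,\mu)\times\bar B(y,1)$ and scale stability modulus $F_\mu$. Then for any $(u',u''),(v',v'')\in\bar\rho^x_\mu$ we have $$D(u'',v'')=\frac{1}{\mu}D(u',v').$$ In particular $\bar\rho^x_\mu$ is the graph of a function (its precision and resolution are equal to $0$).
   Context: For a relation $\rho\subset X\times Y$ between metric spaces $(X,d_X)$, $(Y,d_Y)$, its accuracy is $acc(\rho)=\sup\{|d_Y(y_1,y_2)-d_X(x_1,x_2)|:(x_1,y_1),(x_2,y_2)\in\rho\}$; $\mathrm{dom}\,\rho$ and $\mathrm{im}\,\rho$ denote the projections of $\rho$ to $X$ and $Y$. A zoom sequence at $x$ is a family $\varepsilon\in(0,1]\mapsto\rho^x_\varepsilon\subset\bar B(x,\varepsilon)\times Y$ with $\mathrm{dom}\,\rho^x_\varepsilon=\bar B(x,\varepsilon)$, $\mathrm{im}\,\rho^x_\varepsilon=Y$, $(x,y)\in\rho^x_\varepsilon$ for all $\varepsilon$, together with a zoom modulus $F:(0,1)\to[0,+\infty)$ with $\lim_{\varepsilon\to0}F(\varepsilon)=0$ such that $acc(\rho^x_\varepsilon)\le F(\varepsilon)$ for all $\varepsilon\in(0,1)$, where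 the accuracy is computed with the distance $\frac1\varepsilon d$ on $\bar B(x,\varepsilon)$ and $D$ on $Y$, i.e. $\sup\{|D(y_1,y_2)-\frac1\varepsilon d(x_1,x_2)|:(x_1,y_1),(x_2,y_2)\in\rho^x_\varepsilon\}\le F(\varepsilon)$. For $\mu\in(0,1)$ define $\rho^x_{\varepsilon,\mu}=\{(u',u'')\in\bar B(y,\mu)\times\bar B(y,1):\exists u\in\bar B(x,\varepsilon\mu),\ (u,u')\in\rho^x_\varepsilon,\ (u,u'')\in\rho^x_{\varepsilon\mu}\}$. The zoom sequence is scale stable at scale $\mu$ if there is a relation $\bar\rho^x_\mu\subset\bar B(y,\mu)\times\bar B(y,1)$ and a function $F_\mu$ with $F_\mu(\varepsilon)\to0$ as $\varepsilon\to0$ such that the Hausdorff distance between $\rho^x_{\varepsilon,\mu}$ and $\bar\rho^x_\mu$, in $\bar B(y,\mu)\times\bar B(y,1)$ with the distance $D_\mu((u',u''),(v',v''))=\frac1\mu D(u',v')+D(u'',v'')$, is at most $F_\mu(\varepsilon)$; $F_\mu$ is called a scale stability modulus. *)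

From Stdlib Require Import Reals Lra.
Open Scope R_scope.

Definition is_metric {T : Type} (d : T -> T -> R) : Prop :=
  (forall a b, 0 <= d a b) /\
  (forall a b, d a b = 0 <-> a = b) /\
  (forall a b, d a b = d b a) /\
  (forall a b c, d a c <= d a b + d b c).

Definition cball {T : Type} (dist : T -> T -> R) (c : T) (r : R) (z : T) : Prop :=
  dist c z <= r.

(* acc(rho) <= a, for rho computed with distances dX on X and dY on Y
   (literal unfolding of "sup {...} <= a"). *)
Definition acc_le {X Y : Type} (dX : X -> X -> R) (dY : Y -> Y -> R)
  (rho : X -> Y -> Prop) (a : R) : Prop :=
  forall x1 y1 x2 y2, rho x1 y1 -> rho x2 y2 -> Rabs (dY y1 y2 - dX x1 x2) <= a.

Definition lim0_at0 (F : R -> R) : Prop :=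
  forall eta, 0 < eta -> exists delta, 0 < delta /\
    forall e, 0 < e < 1 -> e < delta -> Rabs (F e) < eta.

Definition zoom_sequence {X Y : Type} (d : X -> X -> R) (D : Y -> Y -> R)
  (x : X) (y : Y) (rho : R -> X -> Y -> Prop) (F : R -> R) : Prop :=
  (forall e, 0 < e <= 1 ->
     (forall u v, rho e u v -> cball d x e u) /\
     (forall u, cball d x e u -> exists v, rho e u v) /\
     (forall v, exists u, rho e u v) /\
     rho e x y) /\
  (forall e, 0 < e < 1 -> 0 <= F e) /\
  lim0_at0 F /\
  (forall e, 0 < e < 1 ->
     acc_le (fun a b => d a b / e) D (rho e) (F e)).

Definition rho_eps_mu {X Y : Type} (d : X -> X -> R) (D : Y -> Y -> R)
  (x : X) (y : Y) (rho : R -> X -> Y -> Prop) (e mu : R) (p : Y * Y) : Prop :=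
  cball D y mu (fst p) /\ cball D y 1 (snd p) /\
  exists u, cball d x (e * mu) u /\ rho e u (fst p) /\ rho (e * mu) u (snd p).

Definition D_mu {Y : Type} (D : Y -> Y -> R) (mu : R) (p q : Y * Y) : R :=
  D (fst p) (fst q) / mu + D (snd p) (snd q).

(* Hausdorff distance between A and B (w.r.t. dist) is at most r:
   literal unfolding of  max(sup_{a in A} inf_{b in B} dist a b,
                             sup_{b in B} inf_{a in A} dist a b) <= r. *)
Definition hausdorff_le {T : Type} (dist : T -> T -> R)
  (A B : T -> Prop) (r : R) : Prop :=
  (forall a, A a -> forall eta, 0 < eta -> exists b, B b /\ dist a b < r + eta) /\
  (forall b, B b -> forall eta, 0 < eta -> exists a, A a /\ dist a b < r + eta).

Definition scale_stable {X Y : Type} (d : X -> X -> R) (D : Y -> Y -> R)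
  (x : X) (y : Y) (rho : R -> X -> Y -> Prop) (mu : R)
  (rhobar : Y * Y -> Prop) (Fmu : R -> R) : Prop :=
  (forall p, rhobar p -> cball D y mu (fst p) /\ cball D y 1 (snd p)) /\
  lim0_at0 Fmu /\
  (forall e, 0 < e <= 1 ->
     hausdorff_le (D_mu D mu) (rho_eps_mu d D x y rho e mu) rhobar (Fmu e)).

(* A pair (u', u'') of the limit relation is, up to Fmu(e), a pair (a1, a2) of
   rho_{e,mu}: images of one point u under rho_e and rho_{e mu}. For two such pairs
   coming from u and w, the accuracy of the zoom sequence at the scales e and e mu gives
   D(a1, b1) ~ d(u, w)/e and D(a2, b2) ~ d(u, w)/(e mu), so mu D(u'', v'') and D(u', v')
   differ by at most O(Fmu(e) + F(e) + F(e mu)), which tends to 0 with e. Taking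
   u' = v' then forces u'' = v''. *)

From Stdlib Require Import Reals Lra.
Open Scope R_scope.

Lemma metric_dist_diff_le {T : Type} (D : T -> T -> R) (a b u v : T) :
  is_metric D -> Rabs (D a b - D u v) <= D a u + D b v.
Proof.
  intros [_ [_ [Dsym Dtri]]].
  pose proof (Dtri a u b); pose proof (Dtri u v b);
  pose proof (Dtri u a v); pose proof (Dtri a b v).
  rewrite (Dsym u a) in *; rewrite (Dsym v b) in *.
  apply Rabs_le; lra.
Qed.

Lemma D_mu_lt_components {Y : Type} (D : Y -> Y -> R) (mu r : R) (p q : Y * Y) :
  is_metric D -> 0 < mu -> D_mu D mu p q < r ->
  D (fst p) (fst q) < mu * r /\ D (snd p) (snd q) < r.
Proof.
  intros [Dpos _] Hmu Hlt; unfold D_mu in Hlt.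
  pose proof (Dpos (fst p) (fst q)); pose proof (Dpos (snd p) (snd q)).
  assert (Hfst : D (fst p) (fst q) / mu < r) by lra.
  split.
  - apply Rmult_lt_compat_l with (r := mu) in Hfst; [|exact Hmu].
    now replace (mu * (D (fst p) (fst q) / mu)) with (D (fst p) (fst q))
      in Hfst by (field; lra).
  - enough (0 <= D (fst p) (fst q) / mu) by lra.
    apply Rmult_le_pos; [lra | left; apply Rinv_0_lt_compat; lra].
Qed.

Lemma rho_eps_mu_ratio_defect_le {X Y : Type} (d : X -> X -> R) (D : Y -> Y -> R)
    (x : X) (y : Y) (rho : R -> X -> Y -> Prop) (F : R -> R) (e mu : R) (p q : Y * Y) :
  zoom_sequence d D x y rho F -> 0 < e < 1 -> 0 < mu < 1 ->
  rho_eps_mu d D x y rho e mu p -> rho_eps_mu d D x y rho e mu q ->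
  Rabs (mu * D (snd p) (snd q) - D (fst p) (fst q)) <= mu * F (e * mu) + F e.
Proof.
  intros [_ [_ [_ Facc]]] He Hmu [_ [_ [u [_ [Hu1 Hu2]]]]] [_ [_ [w [_ [Hw1 Hw2]]]]].
  assert (Hemu : 0 < e * mu < 1) by (split; nra).
  pose proof (Facc e He _ _ _ _ Hu1 Hw1) as Acc1.
  pose proof (Facc (e * mu) Hemu _ _ _ _ Hu2 Hw2) as Acc2; cbv beta in Acc1, Acc2.
  replace (mu * D (snd p) (snd q) - D (fst p) (fst q))
    with (mu * (D (snd p) (snd q) - d u w / (e * mu)) - (D (fst p) (fst q) - d u w / e))
    by (field; lra).
  eapply Rle_trans; [apply Rabs_triang|].
  rewrite Rabs_mult, Rabs_Ropp, (Rabs_right mu) by lra.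
  apply Rplus_le_compat; [apply Rmult_le_compat_l; lra | exact Acc1].
Qed.

Lemma scale_stable_ratio_defect_le {X Y : Type} (d : X -> X -> R) (D : Y -> Y -> R)
    (x : X) (y : Y) (rho : R -> X -> Y -> Prop) (F : R -> R) (mu : R)
    (rhobar : Y * Y -> Prop) (Fmu : R -> R) (e eta : R) (u' u'' v' v'' : Y) :
  is_metric D -> zoom_sequence d D x y rho F -> 0 < mu < 1 ->
  scale_stable d D x y rho mu rhobar Fmu ->
  0 < e < 1 -> 0 < eta ->
  rhobar (u', u'') -> rhobar (v', v'') ->
  Rabs (mu * D u'' v'' - D u' v')
    <= 4 * mu * (Fmu e + eta) + (mu * F (e * mu) + F e).
Proof.
  intros HD Hzoom Hmu [_ [_ Haus]] He Heta Hu Hv.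
  destruct (proj2 (Haus e ltac:(lra)) _ Hu eta Heta) as [[a1 a2] [Ha Hau]].
  destruct (proj2 (Haus e ltac:(lra)) _ Hv eta Heta) as [[b1 b2] [Hb Hbv]].
  apply D_mu_lt_components in Hau as [Hau1 Hau2]; [|exact HD|lra].
  apply D_mu_lt_components in Hbv as [Hbv1 Hbv2]; [|exact HD|lra].
  pose proof (rho_eps_mu_ratio_defect_le _ _ _ _ _ _ _ _ _ _ Hzoom He Hmu Ha Hb) as Hab.
  simpl in *.
  pose proof (metric_dist_diff_le D a1 b1 u' v' HD) as Hfst.
  pose proof (metric_dist_diff_le D a2 b2 u'' v'' HD) as Hsnd.
  replace (mu * D u'' v'' - D u' v')
    with (- (mu * (D a2 b2 - D u'' v'')) + (mu * D a2 b2 - D a1 b1) + (D a1 b1 - D u' v'))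
    by ring.
  eapply Rle_trans; [apply Rabs_triang|].
  eapply Rle_trans; [apply Rplus_le_compat_r, Rabs_triang|].
  rewrite Rabs_Ropp, Rabs_mult, (Rabs_right mu) by lra.
  assert (mu * Rabs (D a2 b2 - D u'' v'') <= mu * (2 * (Fmu e + eta)))
    by (apply Rmult_le_compat_l; lra).
  lra.
Qed.

Lemma lim0_at0_common_delta (F G : R -> R) (t : R) :
  lim0_at0 F -> lim0_at0 G -> 0 < t ->
  exists delta, 0 < delta <= 1 /\
    forall e, 0 < e < delta -> Rabs (F e) < t /\ Rabs (G e) < t.
Proof.
  intros HF HG Ht.
  destruct (HF t Ht) as [d1 [Hd1 HF1]], (HG t Ht) as [d2 [Hd2 HG2]].
  exists (Rmin 1 (Rmin d1 d2)); split.
  - split; [apply Rmin_pos; [lra | now apply Rmin_pos] | apply Rmin_l].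
  - intros e He.
    pose proof (Rmin_l 1 (Rmin d1 d2)); pose proof (Rmin_r 1 (Rmin d1 d2));
    pose proof (Rmin_l d1 d2); pose proof (Rmin_r d1 d2).
    split; [apply HF1 | apply HG2]; lra.
Qed.

Lemma scale_stable_ratio {X Y : Type} (d : X -> X -> R) (D : Y -> Y -> R)
    (x : X) (y : Y) (rho : R -> X -> Y -> Prop) (F : R -> R) (mu : R)
    (rhobar : Y * Y -> Prop) (Fmu : R -> R) (u' u'' v' v'' : Y) :
  is_metric D -> zoom_sequence d D x y rho F -> 0 < mu < 1 ->
  scale_stable d D x y rho mu rhobar Fmu ->
  rhobar (u', u'') -> rhobar (v', v'') ->
  mu * D u'' v'' = D u' v'.
Proof.
  intros HD Hzoom Hmu Hstab Hu Hv.
  set (K := Rabs (mu * D u'' v'' - D u' v')).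
  assert (HK : K <= 0).
  { apply Rle_plus_epsilon; intros eps Heps.
    set (t := eps / 10).
    destruct (lim0_at0_common_delta F Fmu t (proj1 (proj2 (proj2 Hzoom)))
                (proj1 (proj2 Hstab)) ltac:(unfold t; lra)) as [delta [Hdelta Hsmall]].
    set (e := delta / 2).
    destruct (Hsmall e ltac:(unfold e; lra)) as [HFe HFmue].
    destruct (Hsmall (e * mu) ltac:(unfold e; split; nra)) as [HFemu _].
    pose proof (scale_stable_ratio_defect_le d D x y rho F mu rhobar Fmu e t
                  u' u'' v' v'' HD Hzoom Hmu Hstab ltac:(unfold e; lra)
                  ltac:(unfold t; lra) Hu Hv) as Hdef.
    pose proof (Rle_abs (F e)); pose proof (Rle_abs (Fmu e)); pose proof (Rle_abs (F (e * mu))).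
    assert (mu * (Fmu e + t) <= mu * (2 * t)) by (apply Rmult_le_compat_l; lra).
    assert (mu * F (e * mu) <= mu * t) by (apply Rmult_le_compat_l; lra).
    assert (mu * t <= t) by (unfold t; nra).
    fold K in Hdef; unfold t in *; lra. }
  pose proof (Rle_abs (mu * D u'' v'' - D u' v')) as Hle.
  pose proof (Rle_abs (- (mu * D u'' v'' - D u' v'))) as Hge.
  rewrite Rabs_Ropp in Hge; fold K in Hle, Hge; lra.
Qed.

Theorem proposition4p3 (X Y : Type) (d : X -> X -> R) (D : Y -> Y -> R)
  (x : X) (y : Y) (rho : R -> X -> Y -> Prop) (F : R -> R)
  (mu : R) (rhobar : Y * Y -> Prop) (Fmu : R -> R) :
  is_metric d -> is_metric D ->
  zoom_sequence d D x y rho F ->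
  0 < mu < 1 ->
  scale_stable d D x y rho mu rhobar Fmu ->
  (forall u' u'' v' v'', rhobar (u', u'') -> rhobar (v', v'') ->
     D u'' v'' = D u' v' / mu) /\
  (forall u' u'' v'', rhobar (u', u'') -> rhobar (u', v'') -> u'' = v'').
Proof.
  intros _ HD Hzoom Hmu Hstab.
  assert (Hratio := scale_stable_ratio d D x y rho F mu rhobar Fmu).
  split.
  - intros u' u'' v' v'' Hu Hv.
    rewrite <- (Hratio u' u'' v' v'' HD Hzoom Hmu Hstab Hu Hv); field; lra.
  - intros u' u'' v'' Hu Hv.
    pose proof (Hratio u' u'' u' v'' HD Hzoom Hmu Hstab Hu Hv) as Heq.
    destruct HD as [_ [Dsep _]].
    rewrite (proj2 (Dsep u' u') eq_refl) in Heq.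
    apply Dsep; nra.
Qed.
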